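(* cw$^m$-entailment satisfies all KLM postulates of preferential consequence relations, namely (reading ${\bf T}(C)\sqsubseteq D$ as the conditional $C \mid\!\sim D$): (REFL) ${\bf T}(C) \sqsubseteq C$; (LLE) if $A \equiv B$ and ${\bf T}(A) \sqsubseteq C$, then ${\bf T}(B) \sqsubseteq C$; (RW) if $C \sqsubseteq D$ and ${\bf T}(A) \sqsubseteq C$, then ${\bf T}(A) \sqsubseteq D$; (AND) if ${\bf T}(A) \sqsubseteq C$ and ${\bf T}(A) \sqsubseteq D$, then ${\bf T}(A) \sqsubseteq C \sqcap D$; (OR) if ${\bf T}(A) \sqsubseteq C$ and ${\bf T}(B) \sqsubseteq C$, then ${\bf T}(A \sqcup B) \sqsubseteq C$; (CM) if ${\bf T}(A) \sqsubseteq D$ and ${\bf T}(A) \sqsubseteq C$, then ${\bf T}(A \sqcap D) \sqsubseteq C$.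
   Context: Setting: the description logic ${\mathcal{EL}}^{+}_{\bot}$ extended with a typicality operator ${\bf T}$. A ranked knowledge base over a finite set ${\cal C}=\{C_1,\ldots,C_k\}$ of distinguished concepts is $K=\langle {\cal T}_{strict}, {\cal T}_{C_1}, \ldots, {\cal T}_{C_k}, {\cal A} \rangle$, with ${\cal T}_{strict}$ strict concept/role inclusions, ${\cal A}$ an ABox, and each ${\cal T}_{C_j}$ a set of typicality inclusions ${\bf T}(C_j)\sqsubseteq D$ with non-negative integer ranks. For each $C_j$, a total preorder $\leq_{C_j}$ on the domain compares elements by the number of rank-$l$ inclusions of ${\cal T}_{C_j}$ they satisfy, lexicographically from the highest rank. A cw$^m$-model $(\Delta, <_{C_1}, \ldots, <_{C_k}, <, \cdot^I)$ of $K$ satisfies ${\cal T}_{strict}$ and ${\cal A}$, has these $<_{C_j}$, and a global preference $x<y$ iff $x<_{C_i}y$ for some $C_i$ and, for all $C_j$, $x\leq_{C_j}y$ or $x<_{C_h}y$ for some $C_h$ strictly more specific than $C_j$; a typicality concept is interpreted as $({\bf T}(C))^I=\min_<(C^I)$. It is ${\bf T}$-compliant if each nonempty $C_h\in{\cal C}$ has an instance satisfying all of ${\cal T}_{C_h}$, and canonical if every consistent combination of concepts occurring in $K$ and their complements is realized by some domain element. $K\models_{cw^m}{\bf T}(C)\sqsubseteq D$ iff ${\bf T}(C)\sqsubseteq D$ holds in all canonical and ${\bf T}$-compliant cw$^m$-models of $K$. In (LLE) and (RW), $A\equiv B$ and $C\sqsubseteq D$ are understood as holding in all ${\mathcal{EL}}^{+}_{\bot}$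 interpretations. *)

From Stdlib Require Import List ClassicalDescription.
Import ListNotations.
Set Implicit Arguments.

Section DL.
Variables NC NR NI : Type.

(* Concepts.  KB concepts must be EL+_bot concepts (no [COr], see [is_EL]);
   [COr] is needed to form the query concept A ⊔ B of postulate (OR). *)
Inductive concept : Type :=
| CTop : concept
| CBot : concept
| CAtom : NC -> concept
| CAnd : concept -> concept -> concept
| COr : concept -> concept -> concept
| CEx : NR -> concept -> concept.

Fixpoint is_EL (c : concept) : Prop :=
  match c with
  | CTop | CBot | CAtom _ => True
  | CAnd c d => is_EL c /\ is_EL d
  | COr _ _ => False
  | CEx _ c => is_EL c
  end.

Fixpoint subconcepts (c : concept) : list concept :=
  c :: match c with
       | CTop | CBot | CAtom _ => []
       | CAnd c d | COr c d => subconcepts c ++ subconcepts d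
       | CEx _ c => subconcepts c
       end.

Record interp (Delta : Type) := {
  icn : NC -> Delta -> Prop;
  irn : NR -> Delta -> Delta -> Prop;
  iind : NI -> Delta }.

Fixpoint ext (Delta : Type) (I : interp Delta) (c : concept) : Delta -> Prop :=
  match c with
  | CTop => fun _ => True
  | CBot => fun _ => False
  | CAtom a => icn I a
  | CAnd c d => fun x => ext I c x /\ ext I d x
  | COr c d => fun x => ext I c x \/ ext I d x
  | CEx r c => fun x => exists y, irn I r x y /\ ext I c y
  end.

Fixpoint chain (Delta : Type) (I : interp Delta) (rs : list NR) : Delta -> Delta -> Prop :=
  match rs with
  | [] => fun x y => x = y
  | r :: rs => fun x z => exists y, irn I r x y /\ chain I rs y z
  end.

(* Ranked knowledge base <T_strict, T_C1, ..., T_Ck, A>.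
   [kb_dist] lists the pairs (C_j, T_Cj); an element (D, l) of T_Cj stands
   for the typicality inclusion T(C_j) ⊑ D with rank l. *)
Record KB := {
  kb_ci : list (concept * concept);          (* strict concept inclusions C ⊑ D *)
  kb_ri : list (list NR * NR);               (* role inclusions r1 o..o rn ⊑ s *)
  kb_dist : list (concept * list (concept * nat));
  kb_acon : list (concept * NI);             (* assertions C(a) *)
  kb_arole : list (NR * NI * NI) }.          (* assertions r(a,b) *)

Definition wf_KB (K : KB) : Prop :=
  (forall C D, In (C, D) (kb_ci K) -> is_EL C /\ is_EL D) /\
  (forall rs s, In (rs, s) (kb_ri K) -> rs <> []) /\
  (forall C T, In (C, T) (kb_dist K) ->
     is_EL C /\ forall D l, In (D, l) T -> is_EL D) /\
  NoDup (map fst (kb_dist K)) /\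
  (forall C a, In (C, a) (kb_acon K) -> is_EL C).

Definition sat_strict (K : KB) (Delta : Type) (I : interp Delta) : Prop :=
  (forall C D, In (C, D) (kb_ci K) -> forall x, ext I C x -> ext I D x) /\
  (forall rs s, In (rs, s) (kb_ri K) -> forall x y, chain I rs x y -> irn I s x y).

Definition sat_abox (K : KB) (Delta : Type) (I : interp Delta) : Prop :=
  (forall C a, In (C, a) (kb_acon K) -> ext I C (iind I a)) /\
  (forall r a b, In (r, a, b) (kb_arole K) -> irn I r (iind I a) (iind I b)).

Definition strict_subsumes (K : KB) (C D : concept) : Prop :=
  forall (Delta : Type) (I : interp Delta), sat_strict K I ->
    forall x, ext I C x -> ext I D x.

Definition more_specific (K : KB) (Ch Cj : concept) : Prop :=
  strict_subsumes K Ch Cj /\ ~ strict_subsumes K Cj Ch.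

Fixpoint countP (A : Type) (P : A -> Prop) (l : list A) : nat :=
  match l with
  | [] => 0
  | a :: l => (if excluded_middle_informative (P a) then 1 else 0) + countP P l
  end.

(* x satisfies T(C) ⊑ D  iff  x ∈ (¬C ⊔ D)^I *)
Definition sat_typ (Delta : Type) (I : interp Delta) (C D : concept) (x : Delta) : Prop :=
  ~ ext I C x \/ ext I D x.

Definition nsat (Delta : Type) (I : interp Delta) (C : concept)
  (T : list (concept * nat)) (l : nat) (x : Delta) : nat :=
  countP (fun p => snd p = l /\ sat_typ I C (fst p) x) T.

Definition ltC (Delta : Type) (I : interp Delta) (C : concept)
  (T : list (concept * nat)) (x y : Delta) : Prop :=
  exists l, nsat I C T l x > nsat I C T l y /\
            forall h, h > l -> nsat I C T h x = nsat I C T h y.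

Definition leC (Delta : Type) (I : interp Delta) (C : concept)
  (T : list (concept * nat)) (x y : Delta) : Prop :=
  ltC I C T x y \/ forall l, nsat I C T l x = nsat I C T l y.

Definition gpref (K : KB) (Delta : Type) (I : interp Delta) (x y : Delta) : Prop :=
  (exists Ci Ti, In (Ci, Ti) (kb_dist K) /\ ltC I Ci Ti x y) /\
  (forall Cj Tj, In (Cj, Tj) (kb_dist K) ->
     leC I Cj Tj x y \/
     exists Ch Th, In (Ch, Th) (kb_dist K) /\ more_specific K Ch Cj /\ ltC I Ch Th x y).

Definition typ_ext (K : KB) (Delta : Type) (I : interp Delta) (C : concept) (x : Delta) : Prop :=
  ext I C x /\ ~ exists y, ext I C y /\ gpref K I y x.

(* cw^m-model: the preferences are determined by I as above *)
Definition cwm_model (K : KB) (Delta : Type) (I : interp Delta) : Prop :=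
  inhabited Delta /\ sat_strict K I /\ sat_abox K I.

Definition T_compliant (K : KB) (Delta : Type) (I : interp Delta) : Prop :=
  forall Ch Th, In (Ch, Th) (kb_dist K) ->
    (exists x, ext I Ch x) ->
    exists x, ext I Ch x /\ forall D l, In (D, l) Th -> ext I D x.

Definition KB_concepts (K : KB) : list concept :=
  flat_map (fun p => subconcepts (fst p) ++ subconcepts (snd p)) (kb_ci K) ++
  flat_map (fun p => subconcepts (fst p) ++
                     flat_map (fun q => subconcepts (fst q)) (snd p)) (kb_dist K) ++
  flat_map (fun p => subconcepts (fst p)) (kb_acon K).

(* a combination chooses, for each concept C occurring in K, C or its complement *)
Definition realizes (K : KB) (Delta : Type) (I : interp Delta) (f : concept -> bool)
  (x : Delta) : Prop :=
  forall C, In C (KB_concepts K) -> (ext I C x <-> f C = true).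

Definition consistent_comb (K : KB) (f : concept -> bool) : Prop :=
  exists (Delta : Type) (I : interp Delta) (x : Delta),
    cwm_model K I /\ realizes K I f x.

Definition canonical (K : KB) (Delta : Type) (I : interp Delta) : Prop :=
  forall f, consistent_comb K f -> exists x, realizes K I f x.

Definition cwm_entails (K : KB) (C D : concept) : Prop :=
  forall (Delta : Type) (I : interp Delta),
    cwm_model K I -> canonical K I -> T_compliant K I ->
    forall x, typ_ext K I C x -> ext I D x.

Definition valid_incl (C D : concept) : Prop :=
  forall (Delta : Type) (I : interp Delta) x, ext I C x -> ext I D x.

Definition valid_equiv (C D : concept) : Prop := valid_incl C D /\ valid_incl D C.

End DL.

(* REFL, LLE, RW, AND and OR hold model by model, for any preference
   relation.  CM needs the global preference to be smooth: below a
   non-minimal instance of A there must be a minimal one.  It is transitive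
   (by induction on the number of distinguished concepts more specific than
   the one under consideration, since a comparison may be overridden only by
   more specific concepts), and well-founded because it depends only on which
   of the finitely many typicality inclusions of K an element satisfies: the
   number of such "types" realized strictly below an element is bounded and
   decreases along the preference. *)
From Stdlib Require Import Arith List Lia Classical Wf_nat ClassicalDescription.
Import ListNotations.
Set Implicit Arguments.
Unset Strict Implicit.

Section Counting.
Variable A : Type.

Lemma countP_ext (P Q : A -> Prop) l :
  (forall a, In a l -> (P a <-> Q a)) -> countP P l = countP Q l.
Proof.
  induction l as [|a l IH]; simpl; intros H; auto.
  rewrite IH by auto.
  destruct (excluded_middle_informative (P a)), (excluded_middle_informative (Q a));
    firstorder.
Qed.

Lemma countP_le (P Q : A -> Prop) l :
  (forall a, In a l -> P a -> Q a) -> countP P l <= countP Q l.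
Proof.
  induction l as [|a l IH]; simpl; intros H; auto.
  assert (countP P l <= countP Q l) by auto.
  destruct (excluded_middle_informative (P a)), (excluded_middle_informative (Q a));
    try lia.
  exfalso; eauto.
Qed.

Lemma countP_lt (P Q : A -> Prop) l :
  (forall a, In a l -> P a -> Q a) -> (exists a, In a l /\ Q a /\ ~ P a) ->
  countP P l < countP Q l.
Proof.
  induction l as [|a l IH]; simpl; intros H [b [Hb [HQ HP]]]; [contradiction|].
  destruct Hb as [<-|Hb].
  - assert (countP P l <= countP Q l) by (apply countP_le; auto).
    destruct (excluded_middle_informative (P a)), (excluded_middle_informative (Q a));
      try lia; contradiction.
  - assert (countP P l < countP Q l) by (apply IH; eauto).
    destruct (excluded_middle_informative (P a)), (excluded_middle_informative (Q a));
      try lia.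
    exfalso; eauto.
Qed.

End Counting.

Section ConceptPreference.
Variables (NC NR NI Delta : Type) (I : interp NC NR NI Delta).
Variables (C : concept NC NR) (T : list (concept NC NR * nat)).

Lemma ltC_trans x y z : ltC I C T x y -> ltC I C T y z -> ltC I C T x z.
Proof.
  intros [l1 [H1 E1]] [l2 [H2 E2]].
  destruct (Nat.lt_trichotomy l1 l2) as [h|[<-|h]].
  - exists l2. split; [rewrite E1 by lia; lia|].
    intros h' hh. rewrite E1 by lia. apply E2; lia.
  - exists l1. split; [lia|]. intros; rewrite E1, E2; auto.
  - exists l1. split; [rewrite <- E2 by lia; lia|].
    intros h' hh. rewrite E1 by lia. apply E2; lia.
Qed.

Lemma leC_ltC_trans x y z : leC I C T x y -> ltC I C T y z -> ltC I C T x z.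
Proof.
  intros [H|H] Hyz; [eapply ltC_trans; eauto|].
  destruct Hyz as [l [Hl E]]. exists l. rewrite H. split; auto.
  intros h hh. rewrite H; auto.
Qed.

Lemma ltC_leC_trans x y z : ltC I C T x y -> leC I C T y z -> ltC I C T x z.
Proof.
  intros Hxy [H|H]; [eapply ltC_trans; eauto|].
  destruct Hxy as [l [Hl E]]. exists l. rewrite <- H. split; auto.
  intros h hh. rewrite <- H; auto.
Qed.

Lemma leC_trans x y z : leC I C T x y -> leC I C T y z -> leC I C T x z.
Proof.
  intros [H|H] Hyz.
  - left. eapply ltC_leC_trans; eauto.
  - destruct Hyz as [Hyz|Hyz].
    + left. eapply leC_ltC_trans; eauto. right; auto.
    + right. intros; rewrite H; auto.
Qed.

End ConceptPreference.

Section Specificity.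
Variables (NC NR NI : Type) (K : KB NC NR NI).

Lemma more_specific_trans A B C :
  more_specific K A B -> more_specific K B C -> more_specific K A C.
Proof.
  unfold more_specific, strict_subsumes. intros [HAB HBA] [HBC HCB]. split.
  - eauto.
  - intros HCA. apply HBA. eauto.
Qed.

Lemma more_specific_irrefl A : ~ more_specific K A A.
Proof. unfold more_specific, strict_subsumes. intros [_ H]; auto. Qed.

Definition n_more_specific (C : concept NC NR) : nat :=
  countP (fun p => more_specific K (fst p) C) (kb_dist K).

Lemma n_more_specific_lt Ch Th C :
  In (Ch, Th) (kb_dist K) -> more_specific K Ch C ->
  n_more_specific Ch < n_more_specific C.
Proof.
  intros Hin Hms. apply countP_lt.
  - intros p _ Hp. eapply more_specific_trans; eauto.
  - exists (Ch, Th). simpl. auto using more_specific_irrefl.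
Qed.

End Specificity.

Section GlobalPreference.
Variables (NC NR NI Delta : Type) (K : KB NC NR NI) (I : interp NC NR NI Delta).

Definition lt_more_specific (C : concept NC NR) (x y : Delta) : Prop :=
  exists Ch Th, In (Ch, Th) (kb_dist K) /\ more_specific K Ch C /\ ltC I Ch Th x y.

Section Transitivity.
Variables x y z : Delta.
Hypotheses (Hxy : gpref K I x y) (Hyz : gpref K I y z).

Lemma gpref_trans_at C : forall T, In (C, T) (kb_dist K) ->
  (leC I C T x z \/ lt_more_specific C x z) /\
  (ltC I C T x y \/ ltC I C T y z -> ltC I C T x z \/ lt_more_specific C x z).
Proof.
  induction C as [C IH] using (induction_ltof1 _ (n_more_specific K)).
  intros T Hin.
  assert (Hover : forall Ch Th, In (Ch, Th) (kb_dist K) -> more_specific K Ch C ->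
            ltC I Ch Th x y \/ ltC I Ch Th y z -> lt_more_specific C x z).
  { intros Ch Th Hh Hms Hlt.
    destruct (IH Ch (n_more_specific_lt Hh Hms) Th Hh) as [_ Hstrict].
    destruct (Hstrict Hlt) as [Hxz|[Ch' [Th' [Hh' [Hms' Hxz]]]]].
    - exists Ch, Th; auto.
    - exists Ch', Th'; eauto using more_specific_trans. }
  destruct Hxy as [_ Hxy_at], Hyz as [_ Hyz_at].
  destruct (Hxy_at C T Hin) as [Hle1|[Ch [Th [Hh [Hms Hlt]]]]];
    [|split; right; eapply Hover; eauto].
  destruct (Hyz_at C T Hin) as [Hle2|[Ch [Th [Hh [Hms Hlt]]]]];
    [|split; right; eapply Hover; eauto].
  split.
  - left. eapply leC_trans; eauto.
  - intros [Hlt|Hlt]; left.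
    + eapply ltC_leC_trans; eauto.
    + eapply leC_ltC_trans; eauto.
Qed.

Lemma gpref_trans : gpref K I x z.
Proof.
  split.
  - destruct Hxy as [[Ci [Ti [Hi Hlt]]] _].
    destruct (proj2 (gpref_trans_at Hi) (or_introl Hlt))
      as [Hxz|[Ch [Th [Hh [_ Hxz]]]]]; eauto.
  - intros Cj Tj Hj. exact (proj1 (gpref_trans_at Hj)).
Qed.

End Transitivity.

Definition bool_of_prop (P : Prop) : bool :=
  if excluded_middle_informative P then true else false.

Lemma bool_of_prop_inj P Q : bool_of_prop P = bool_of_prop Q -> (P <-> Q).
Proof.
  unfold bool_of_prop.
  destruct (excluded_middle_informative P), (excluded_middle_informative Q);
    intros; try discriminate; tauto.
Qed.

Definition typicality_inclusions : list (concept NC NR * concept NC NR) :=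
  flat_map (fun p => map (fun q => (fst p, fst q)) (snd p)) (kb_dist K).

Definition typicality_type (x : Delta) : list bool :=
  map (fun cd => bool_of_prop (sat_typ I (fst cd) (snd cd) x)) typicality_inclusions.

Lemma typicality_type_nsat x x' :
  typicality_type x = typicality_type x' ->
  forall C T, In (C, T) (kb_dist K) -> forall l, nsat I C T l x = nsat I C T l x'.
Proof.
  intros Htype C T Hin l. apply countP_ext. intros [D k] HD. simpl.
  assert (HCD : In (C, D) typicality_inclusions).
  { apply in_flat_map. exists (C, T). split; auto.
    apply (in_map (fun q => (C, fst q)) T (D, k)); auto. }
  pose proof (ext_in_map Htype _ HCD) as Hsame.
  apply bool_of_prop_inj in Hsame. simpl in Hsame. tauto.
Qed.

Lemma same_type_not_gpref x x' :
  typicality_type x = typicality_type x' -> ~ gpref K I x x'.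
Proof.
  intros Htype [[C [T [Hin [l [Hl _]]]]] _].
  rewrite (typicality_type_nsat Htype Hin l) in Hl. lia.
Qed.

Fixpoint bool_lists (n : nat) : list (list bool) :=
  match n with
  | 0 => [[]]
  | S n => map (cons true) (bool_lists n) ++ map (cons false) (bool_lists n)
  end.

Lemma in_bool_lists (bs : list bool) : In bs (bool_lists (length bs)).
Proof.
  induction bs as [|[] bs IH]; simpl; auto; apply in_or_app; [left|right];
    apply in_map; auto.
Qed.

Definition n_types_below (y : Delta) : nat :=
  countP (fun bs => exists x, typicality_type x = bs /\ gpref K I x y)
    (bool_lists (length typicality_inclusions)).

Lemma gpref_wf : well_founded (gpref K I).
Proof.
  apply (well_founded_lt_compat _ n_types_below). intros x y Hxy. apply countP_lt.
  - intros bs _ [x' [Hx' Hx'x]]. exists x'. split; auto. eapply gpref_trans; eauto.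
  - exists (typicality_type x). split; [|split].
    + assert (Hlen : length (typicality_type x) = length typicality_inclusions)
        by apply length_map.
      rewrite <- Hlen. apply in_bool_lists.
    + exists x; auto.
    + intros [x' [Hx' Hx'x]]. exact (same_type_not_gpref Hx' Hx'x).
Qed.

Lemma gpref_smooth (P : Delta -> Prop) y : P y ->
  exists m, P m /\ forall z, P z -> ~ gpref K I z m.
Proof.
  induction y as [y IH] using (well_founded_ind gpref_wf). intros Py.
  destruct (classic (exists z, P z /\ gpref K I z y)) as [[z [Pz Hzy]]|Hmin].
  - eapply IH; eauto.
  - exists y. split; auto. intros z Pz Hzy. apply Hmin; eauto.
Qed.

End GlobalPreference.

Section Postulates.
Variables (NC NR NI : Type) (K : KB NC NR NI).

Lemma cwm_entails_refl C : cwm_entails K C C.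
Proof. intros Delta I _ _ _ x [Hx _]; exact Hx. Qed.

Lemma cwm_entails_lle A B C :
  valid_equiv NI A B -> cwm_entails K A C -> cwm_entails K B C.
Proof.
  intros [HAB HBA] H Delta I Hm Hc Ht x [Hx Hmin].
  apply (H Delta I Hm Hc Ht x). split; [apply HBA; exact Hx|].
  intros [y [Hy Hyx]]. apply Hmin. exists y. split; [apply HAB|]; assumption.
Qed.

Lemma cwm_entails_rw A C D :
  valid_incl NI C D -> cwm_entails K A C -> cwm_entails K A D.
Proof. intros HCD H Delta I Hm Hc Ht x Hx. apply HCD. eapply H; eauto. Qed.

Lemma cwm_entails_and A C D :
  cwm_entails K A C -> cwm_entails K A D -> cwm_entails K A (CAnd C D).
Proof. intros HC HD Delta I Hm Hc Ht x Hx. simpl. split; eauto. Qed.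

Lemma cwm_entails_or A B C :
  cwm_entails K A C -> cwm_entails K B C -> cwm_entails K (COr A B) C.
Proof.
  intros HA HB Delta I Hm Hc Ht x [[Hx|Hx] Hmin];
    [apply (HA Delta I Hm Hc Ht x)|apply (HB Delta I Hm Hc Ht x)];
    split; auto; intros [y [Hy Hyx]]; apply Hmin; exists y; simpl; auto.
Qed.

Lemma cwm_entails_cm A C D :
  cwm_entails K A D -> cwm_entails K A C -> cwm_entails K (CAnd A D) C.
Proof.
  intros HD HC Delta I Hm Hc Ht x [[HxA HxD] Hmin].
  apply (HC Delta I Hm Hc Ht x). split; auto.
  intros [y [Hy Hyx]].
  destruct (gpref_smooth K I (P := fun z => ext I A z /\ gpref K I z x) (conj Hy Hyx))
    as [m [[HmA Hmx] Hm_min]].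
  (* m is a typical A, hence a D, and so an (A ⊓ D) preferred to x *)
  apply Hmin. exists m. split; auto. simpl. split; auto.
  apply (HD Delta I Hm Hc Ht m). split; auto.
  intros [w [Hw Hwm]]. apply (Hm_min w); auto. split; auto.
  eapply gpref_trans; eauto.
Qed.

End Postulates.

Theorem proposition6 (NC NR NI : Type) (K : KB NC NR NI) (HK : wf_KB K) :
  let concept := concept NC NR in
  (* REFL *)
  (forall (C : concept), cwm_entails K C C) /\
  (* LLE *)
  (forall (A B C : concept), valid_equiv NI A B -> cwm_entails K A C -> cwm_entails K B C) /\
  (* RW *)
  (forall (A C D : concept), valid_incl NI C D -> cwm_entails K A C -> cwm_entails K A D) /\
  (* AND *)
  (forall (A C D : concept), cwm_entails K A C -> cwm_entails K A D ->
     cwm_entails K A (CAnd C D)) /\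
  (* OR *)
  (forall (A B C : concept), cwm_entails K A C -> cwm_entails K B C ->
     cwm_entails K (COr A B) C) /\
  (* CM *)
  (forall (A C D : concept), cwm_entails K A D -> cwm_entails K A C ->
     cwm_entails K (CAnd A D) C).
Proof.
  intros concept.
  split; [intros C; apply cwm_entails_refl|].
  split; [intros A B C; apply cwm_entails_lle|].
  split; [intros A C D; apply cwm_entails_rw|].
  split; [intros A C D; apply cwm_entails_and|].
  split; [intros A B C; apply cwm_entails_or|].
  intros A C D; apply cwm_entails_cm.
Qed.
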